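(* Let $u\geq 1$, $a=(-u,-1)$, $b=(u,1)$, $s(x)=-x/u$, and fix $x<-u$. Then for all $p\neq 0$ close enough to zero, whenever $y_p>1$ and $(x,y_p)\in B_p(a,b)$, we have $y_p<2\,s(x)+3$.
   Context: For $p\neq 0$ and $(x,y)\in\mathbb{R}^2$ let $L_p((x,y))=(|x|^p+|y|^p)^{1/p}$; for $p<0$ this is extended by setting $L_p((x,y))=0$ whenever $x=0$ or $y=0$. The bisector is $B_p(a,b)=\{q\in\mathbb{R}^2: L_p(a-q)=L_p(b-q)\}$. *)

From Stdlib Require Import Reals.
Open Scope R_scope.

(* |t|^p for real exponent p; for t = 0 we use 0 (only relevant for p > 0,
   since for p < 0 the L_p convention below handles zero coordinates). *)
Definition abspow (t p : R) : R :=
  if Req_EM_T t 0 then 0 else Rpower (Rabs t) p.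

(* L_p((x,y)) = (|x|^p + |y|^p)^(1/p), with L_p = 0 when p < 0 and x = 0 or y = 0.
   For p > 0 and x = y = 0 the value is 0. *)
Definition Lp (p : R) (v : R * R) : R :=
  let '(x, y) := v in
  if Rlt_dec p 0 then
    (if Req_EM_T x 0 then 0 else if Req_EM_T y 0 then 0
     else Rpower (abspow x p + abspow y p) (1 / p))
  else
    (if Req_EM_T (abspow x p + abspow y p) 0 then 0
     else Rpower (abspow x p + abspow y p) (1 / p)).

Definition vsub (a b : R * R) : R * R := (fst a - fst b, snd a - snd b).

Definition bisector (p : R) (a b : R * R) (q : R * R) : Prop :=
  Lp p (vsub a q) = Lp p (vsub b q).

(* The bisector condition reads (y+1)^p - (y-1)^p = (u-x)^p - (-x-u)^p.  The mean
   value theorem for t |-> t^p on both sides gives s in (y-1, y+1) and t in (-x-u, u-x)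
   with s^(p-1) = u t^(p-1), i.e. (1-p)(ln s - ln t) = -ln u: for p near 0 the point s
   is close to t/u.  If y >= 2(-x/u) + 3, then s > y - 1 >= 2(u-x)/u > 2t/u, so
   ln s - ln t > ln 2 - ln u, and the identity forces ln 2 <= p (ln 2 - ln u), which
   fails as soon as |p| ln (2u) < ln 2. *)

From Stdlib Require Import Reals Lra Psatz.
Open Scope R_scope.

Lemma abspow_nonzero t p : t <> 0 -> abspow t p = Rpower (Rabs t) p.
Proof. intro ht. unfold abspow. destruct (Req_EM_T t 0); [contradiction | reflexivity]. Qed.

Lemma Lp_nonzero p a b : a <> 0 -> b <> 0 ->
  Lp p (a, b) = Rpower (Rpower (Rabs a) p + Rpower (Rabs b) p) (1 / p).
Proof.
  intros ha hb. unfold Lp. rewrite !abspow_nonzero by assumption.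
  destruct (Rlt_dec p 0).
  - destruct (Req_EM_T a 0); [contradiction |].
    destruct (Req_EM_T b 0); [contradiction | reflexivity].
  - destruct (Req_EM_T _ 0) as [e |]; [exfalso | reflexivity].
    unfold Rpower in e. pose proof (exp_pos (p * ln (Rabs a))).
    pose proof (exp_pos (p * ln (Rabs b))). lra.
Qed.

Lemma Rpower_inv_exp_inj A B p : p <> 0 -> 0 < A -> 0 < B ->
  Rpower A (1 / p) = Rpower B (1 / p) -> A = B.
Proof.
  intros hp hA hB e.
  assert (ep : Rpower (Rpower A (1 / p)) p = Rpower (Rpower B (1 / p)) p) by now rewrite e.
  rewrite !Rpower_mult in ep. replace (1 / p * p) with 1 in ep by (field; exact hp).
  now rewrite !Rpower_1 in ep.
Qed.

Lemma Lp_eq_power_sum p a1 a2 b1 b2 : p <> 0 ->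
  a1 <> 0 -> a2 <> 0 -> b1 <> 0 -> b2 <> 0 ->
  Lp p (a1, a2) = Lp p (b1, b2) ->
  Rpower (Rabs a1) p + Rpower (Rabs a2) p = Rpower (Rabs b1) p + Rpower (Rabs b2) p.
Proof.
  intros hp ha1 ha2 hb1 hb2 e. rewrite !Lp_nonzero in e by assumption.
  apply Rpower_inv_exp_inj in e; [exact e | exact hp | |];
    apply Rplus_lt_0_compat; apply exp_pos.
Qed.

Lemma bisector_power_balance u x y p : 0 < u -> x < - u -> 1 < y -> p <> 0 ->
  bisector p (- u, -1) (u, 1) (x, y) ->
  Rpower (y + 1) p - Rpower (y - 1) p = Rpower (- x + u) p - Rpower (- x - u) p.
Proof.
  intros hu hx hy hp hb. unfold bisector, vsub in hb; cbn [fst snd] in hb.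
  apply Lp_eq_power_sum in hb; try lra.
  rewrite (Rabs_right (- u - x)), (Rabs_left (-1 - y)), (Rabs_right (u - x)),
    (Rabs_left (1 - y)) in hb by lra.
  replace (- (-1 - y)) with (y + 1) in hb by ring.
  replace (- (1 - y)) with (y - 1) in hb by ring.
  replace (- u - x) with (- x - u) in hb by ring.
  replace (u - x) with (- x + u) in hb by ring.
  lra.
Qed.

Lemma Rpower_MVT p a b : 0 < a < b -> exists c, a < c < b /\
  Rpower b p - Rpower a p = p * Rpower c (p - 1) * (b - a).
Proof.
  intros [ha hab].
  destruct (MVT_cor2 (fun t => Rpower t p) (fun t => p * Rpower t (p - 1)) a b hab)
    as [c [e hc]].
  - intros c hc. apply derivable_pt_lim_power. lra.
  - exists c. split; [exact hc | exact e].
Qed.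

Lemma Rpower_increments_eq p a b c d : p <> 0 -> 0 < a < b -> 0 < c < d ->
  Rpower b p - Rpower a p = Rpower d p - Rpower c p ->
  exists s t, a < s < b /\ c < t < d /\
    ln (b - a) + (p - 1) * ln s = ln (d - c) + (p - 1) * ln t.
Proof.
  intros hp hab hcd e.
  destruct (Rpower_MVT p a b hab) as [s [hs es]].
  destruct (Rpower_MVT p c d hcd) as [t [ht et]].
  exists s, t. split; [exact hs |]. split; [exact ht |].
  assert (mean : (b - a) * Rpower s (p - 1) = (d - c) * Rpower t (p - 1)).
  { apply Rmult_eq_reg_l with p; [| exact hp]. lra. }
  apply (f_equal ln) in mean.
  rewrite !ln_mult, !ln_Rpower in mean by (apply exp_pos || lra).
  exact mean.
Qed.

Lemma ln_2_div_ln_2mul_pos u : 1 <= u -> 0 < ln 2 / ln (2 * u).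
Proof.
  intro hu. pose proof ln_lt_2.
  apply Rdiv_lt_0_compat; [lra |]. rewrite <- ln_1. apply ln_increasing; lra.
Qed.

Lemma small_exponent_bound u p : 1 <= u -> Rabs p < ln 2 / ln (2 * u) ->
  p < 1 /\ 0 < ln u + (1 - p) * (ln 2 - ln u).
Proof.
  intros hu hp. pose proof ln_lt_2.
  assert (lu : 0 <= ln u).
  { destruct (Req_dec u 1) as [-> | ]; [rewrite ln_1; lra |].
    rewrite <- ln_1. left. apply ln_increasing; lra. }
  rewrite ln_mult in hp by lra.
  apply Rmult_lt_compat_r with (r := ln 2 + ln u) in hp; [| lra].
  unfold Rdiv in hp. rewrite Rmult_assoc, Rinv_l in hp by lra.
  destruct (Rcase_abs p); [rewrite Rabs_left in hp | rewrite Rabs_right in hp];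
    try lra; split; nra.
Qed.

Theorem lemma7 (u x : R) (hu : 1 <= u) (hx : x < - u) :
  exists delta : R, 0 < delta /\
    forall p : R, p <> 0 -> Rabs p < delta ->
      forall y : R, 1 < y ->
        bisector p (- u, -1) (u, 1) (x, y) ->
        y < 2 * (- x / u) + 3.
Proof.
  exists (ln 2 / ln (2 * u)). split; [exact (ln_2_div_ln_2mul_pos u hu) |].
  intros p hp hpd y hy hb.
  destruct (small_exponent_bound u p hu hpd) as [hp1 hsmall].
  apply bisector_power_balance in hb; try lra.
  destruct (Rpower_increments_eq p (y - 1) (y + 1) (- x - u) (- x + u) hp)
    as (s & t & hs & ht & mean); try lra.
  replace (y + 1 - (y - 1)) with 2 in mean by ring.
  replace (- x + u - (- x - u)) with (2 * u) in mean by ring.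
  rewrite ln_mult in mean by lra.
  apply Rnot_le_lt. intro hge.
  assert (hst : 2 / u * t < s).
  { apply Rlt_le_trans with (2 / u * (- x + u)).
    - apply Rmult_lt_compat_l; [apply Rdiv_lt_0_compat |]; lra.
    - replace (2 / u * (- x + u)) with (2 * (- x / u) + 2) by (field; lra). lra. }
  assert (hlog : ln 2 - ln u + ln t < ln s).
  { apply ln_increasing in hst;
      [| apply Rmult_lt_0_compat; [apply Rdiv_lt_0_compat |]; lra].
    unfold Rdiv in hst. rewrite !ln_mult, ln_Rinv in hst; try lra.
    - apply Rinv_0_lt_compat; lra.
    - apply Rmult_lt_0_compat; [lra | apply Rinv_0_lt_compat; lra]. }
  nra.
Qed.
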